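(* Let $D$ be a tournament missing disjoint paths of length 2 and let $C=a_1b_1c_1,\dots,a_kb_kc_k$ be a double cycle in $\Delta(D)$. For each $i\in\{1,\dots,k\}$ choose $\{x_i,y_i\}=\{a_i,b_i\}$ or $\{x_i,y_i\}=\{b_i,c_i\}$ (with either labelling). Then for all $j\in\{1,\dots,k\}$ and all $i\neq j$: (1) $x_j\to x_i$ if and only if $y_i\to x_j$; (2) $x_j\to y_i$ if and only if $x_i\to x_j$; (3) $y_j\to x_i$ if and only if $y_i\to y_j$; (4) $y_j\to y_i$ if and only if $x_i\to y_j$.
   Context: All digraphs are finite oriented graphs. $N^+(v)$ is the out-neighborhood; $N^{++}(v)$ is the set of vertices $w\notin N^+(v)\cup\{v\}$ with $u\to w$ for some $u\in N^+(v)$. A missing edge is a pair of distinct non-adjacent vertices; the missing graph is formed by the missing edges. $D$ is a tournament missing disjoint paths of length 2 if its missing graph is a vertex-disjoint union of paths each with exactly two edges. For missing edges $\{x,y\},\{a,b\}$, $\{x,y\}$ loses to $\{a,b\}$ (written $xy\to ab$) if the endpoints can be labelled so that $x\to a$, $b\notin N^+(x)\cup N^{++}(x)$, $y\to b$, $a\notin N^+(y)\cup N^{++}(y)$. $\Delta(D)$ has the missing edges as vertices and arcs $(e,e')$ whenever $e$ loses to $e'$. For missing paths $abc$, $xyz$ (edges $ab,bc$ and $xy,yz$), $abc\to xyz$ means each of $ab,bc$ loses to each of $xy,yz$. A double cycle is a sequence $C=a_1b_1c_1,\dots,a_kb_kc_k$ ($k\ge2$) of distinct missing paths of length 2 (components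 of the missing graph) with $a_ib_ic_i\to a_{i+1}b_{i+1}c_{i+1}$ for all $i$, indices modulo $k$. *)

From mathcomp Require Import all_boot.
Set Implicit Arguments. Unset Strict Implicit. Unset Printing Implicit Defensive.

Definition oriented (T : finType) (arc : rel T) : Prop :=
  (forall v, ~~ arc v v) /\ (forall u v, arc u v -> ~~ arc v u).

Section Defs.
Variables (T : finType) (arc : rel T).

Definition Nout (v : T) : {set T} := [set w | arc v w].
Definition Nout2 (v : T) : {set T} :=
  [set w | (w \notin Nout v) && (w != v) && [exists u, (u \in Nout v) && arc u w]].

Definition miss (x y : T) : bool := (x != y) && ~~ arc x y && ~~ arc y x.

(* a b c is a component of the missing graph which is a path with the two
   edges ab, bc *)
Definition mpath (a b c : T) : Prop :=
  [/\ a != c, miss a b, miss b c &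
      forall z, [/\ miss a z = (z == b), miss c z = (z == b) &
                    miss b z = (z == a) || (z == c)]].

Definition missing_disjoint_P3 : Prop :=
  forall x y, miss x y -> exists a b c, mpath a b c /\
    ((x == a) && (y == b) || (x == b) && (y == a) ||
     (x == b) && (y == c) || (x == c) && (y == b)).

Definition loses_lab (x y a b : T) : bool :=
  [&& arc x a, b \notin Nout x :|: Nout2 x, arc y b & a \notin Nout y :|: Nout2 y].

Definition loses (x y a b : T) : bool :=
  [|| loses_lab x y a b, loses_lab y x a b, loses_lab x y b a | loses_lab y x b a].

Definition ploses (a b c x y z : T) : bool :=
  [&& loses a b x y, loses a b y z, loses b c x y & loses b c y z].

Definition double_cycle (k : nat) (a b c : nat -> T) : Prop :=
  [/\ 2 <= k,
      forall i, i < k -> mpath (a i) (b i) (c i),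
      forall i j, i < j < k -> [set a i; b i; c i] != [set a j; b j; c j] &
      forall i, i < k -> ploses (a i) (b i) (c i)
                               (a (i.+1 %% k)) (b (i.+1 %% k)) (c (i.+1 %% k))].

End Defs.

From mathcomp Require Import all_boot zify.
Set Implicit Arguments. Unset Strict Implicit. Unset Printing Implicit Defensive.

(* Fix a vertex v on the path j of the double cycle. If both ends of an edge
   of the path m dominate v, then v dominates no vertex of the next path and
   does not lie on it: each such vertex w lies outside N^+(u) and N^++(u)
   for an end u of that edge, so the arc u -> v cannot continue to w. Since
   vertices of distinct components are adjacent, both ends of an edge of the
   next path then dominate v. Going around the cycle this reaches the path j,
   which is impossible. Dually, v cannot dominate both ends of an edge of
   another path. So v dominates exactly one end of every edge xy of every
   other path, which is the four equivalences. *)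

Section Losing.
Variables (T : finType) (arc : rel T).
Hypothesis arc_oriented : oriented arc.

Definition far (u w : T) : bool := w \notin Nout arc u :|: Nout2 arc u.

Lemma arc_irrefl u : arc u u = false.
Proof. by case: arc_oriented => /(_ u)/negPf. Qed.

Lemma arc_asym u w : arc u w -> ~~ arc w u.
Proof. by case: arc_oriented => _; apply. Qed.

Lemma far_arc u w : far u w -> ~~ arc u w.
Proof. by rewrite /far !inE negb_or => /andP[]. Qed.

Lemma far_2path u v w : far u w -> arc u v -> ~~ arc v w && (v != w).
Proof.
move=> uw uv; have [vw|vw] := eqVneq v w.
  by move: uv; rewrite vw (negPf (far_arc uw)).
rewrite andbT; apply/negP => vw_arc; move: uw.
have [wu|wu] := eqVneq w u; first by rewrite wu (negPf (arc_asym uv)) in vw_arc.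
rewrite /far /Nout2 !inE negb_or wu /= => /andP[/negPf-> /existsP]; apply.
by exists v; rewrite inE uv.
Qed.

Lemma loses_far_target x y p q w :
  loses arc x y p q -> w \in [:: p; q] -> far x w || far y w.
Proof.
by rewrite !inE /far => /or4P[] /and4P[_ h1 _ h2] /orP[] /eqP->;
  rewrite ?h1 ?h2 ?orbT.
Qed.

Lemma loses_far_source x y p q u :
  loses arc x y p q -> u \in [:: x; y] -> far u p || far u q.
Proof.
by rewrite !inE /far => /or4P[] /and4P[_ h1 _ h2] /orP[] /eqP->;
  rewrite ?h1 ?h2 ?orbT.
Qed.

Lemma loses_common_out x y p q v w : loses arc x y p q ->
  arc x v -> arc y v -> w \in [:: p; q] -> ~~ arc v w && (v != w).
Proof.
move=> xypq xv yv /(loses_far_target xypq) /orP[] farw.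
- exact: far_2path farw xv.
- exact: far_2path farw yv.
Qed.

Lemma loses_common_in x y p q u v : loses arc x y p q ->
  arc v p -> arc v q -> u \in [:: x; y] -> ~~ arc u v && (u != v).
Proof.
move=> xypq vp vq /(loses_far_source xypq) /orP[] farw; apply/andP; split.
- by apply/negP => uv; move: (far_2path farw uv); rewrite vp.
- by apply/eqP => uv; move: (far_arc farw); rewrite uv vp.
- by apply/negP => uv; move: (far_2path farw uv); rewrite vq.
- by apply/eqP => uv; move: (far_arc farw); rewrite uv vq.
Qed.

Definition dominated_by_edge (v a b c : T) : bool :=
  (arc a v && arc b v) || (arc b v && arc c v).

Definition dominates_edge (v a b c : T) : bool :=
  (arc v a && arc v b) || (arc v b && arc v c).

Lemma ploses_dominated a b c a' b' c' v w : ploses arc a b c a' b' c' ->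
  dominated_by_edge v a b c -> w \in [:: a'; b'; c'] -> ~~ arc v w && (v != w).
Proof.
case/and4P=> ab_a'b' ab_b'c' bc_a'b' bc_b'c' /orP[] /andP[uv u'v].
all: rewrite !inE => /or3P[] /eqP->.
all: first [ by apply: loses_common_out ab_a'b' uv u'v _; rewrite !inE eqxx ?orbT
           | by apply: loses_common_out ab_b'c' uv u'v _; rewrite !inE eqxx ?orbT
           | by apply: loses_common_out bc_a'b' uv u'v _; rewrite !inE eqxx ?orbT
           | by apply: loses_common_out bc_b'c' uv u'v _; rewrite !inE eqxx ?orbT ].
Qed.

Lemma ploses_dominates a b c a' b' c' v u : ploses arc a b c a' b' c' ->
  dominates_edge v a' b' c' -> u \in [:: a; b; c] -> ~~ arc u v && (u != v).
Proof.
case/and4P=> ab_a'b' ab_b'c' bc_a'b' bc_b'c' /orP[] /andP[vw vw'].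
all: rewrite !inE => /or3P[] /eqP->.
all: first [ by apply: loses_common_in ab_a'b' vw vw' _; rewrite !inE eqxx ?orbT
           | by apply: loses_common_in ab_b'c' vw vw' _; rewrite !inE eqxx ?orbT
           | by apply: loses_common_in bc_a'b' vw vw' _; rewrite !inE eqxx ?orbT
           | by apply: loses_common_in bc_b'c' vw vw' _; rewrite !inE eqxx ?orbT ].
Qed.

Lemma mpath_not_dominated_by_edge a b c v : mpath arc a b c ->
  v \in [:: a; b; c] -> ~~ dominated_by_edge v a b c.
Proof.
case=> _ /andP[/andP[_ /negPf ab] /negPf ba] /andP[/andP[_ /negPf bc] _] _.
rewrite /dominated_by_edge !inE => /or3P[] /eqP->.
all: by rewrite ?arc_irrefl ?ab ?ba ?bc ?andbF.
Qed.

Lemma mpath_not_dominates_edge a b c v : mpath arc a b c ->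
  v \in [:: a; b; c] -> ~~ dominates_edge v a b c.
Proof.
case=> _ /andP[/andP[_ /negPf ab] /negPf ba] /andP[_ /negPf cb] _.
rewrite /dominates_edge !inE => /or3P[] /eqP->.
all: by rewrite ?arc_irrefl ?ab ?ba ?cb ?andbF.
Qed.

End Losing.

Section Components.
Variables (T : finType) (arc : rel T).

Lemma miss_sym u w : miss arc u w = miss arc w u.
Proof. by rewrite /miss eq_sym andbAC. Qed.

Lemma mpath_miss_closed a b c u w : mpath arc a b c ->
  u \in [:: a; b; c] -> miss arc u w -> w \in [:: a; b; c].
Proof.
case=> _ _ _ /(_ w) [missa missc missb].
rewrite !inE => /or3P[] /eqP->; rewrite ?missa ?missb ?missc.
all: by [move/eqP->; rewrite eqxx ?orbT | case/orP => /eqP->; rewrite eqxx ?orbT].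
Qed.

Lemma mpath_meet a b c a' b' c' u : mpath arc a b c -> mpath arc a' b' c' ->
  u \in [:: a; b; c] -> u \in [:: a'; b'; c'] ->
  {subset [:: a'; b'; c'] <= [:: a; b; c]}.
Proof.
move=> abc abc' uS uS'; have [_ a'b' b'c' _] := abc'.
have b'S : b' \in [:: a; b; c].
  rewrite !inE in uS'; case/or3P: uS' => /eqP uE; rewrite uE in uS => //.
  - exact: mpath_miss_closed abc uS a'b'.
  - by apply: mpath_miss_closed abc uS _; rewrite miss_sym.
have a'S : a' \in [:: a; b; c].
  by apply: mpath_miss_closed abc b'S _; rewrite miss_sym.
have c'S : c' \in [:: a; b; c] by apply: mpath_miss_closed abc b'S b'c'.
by apply/allP; rewrite /= a'S b'S c'S.
Qed.

End Components.

Lemma succ_mod_closed (P : pred nat) k m i :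
  (forall n, n < k -> P n -> P (n.+1 %% k)) -> m < k -> i < k -> P m -> P i.
Proof.
move=> Psucc mk ik Pm.
have Pmn n : P ((m + n) %% k).
  elim: n => [|n IHn]; first by rewrite addn0 modn_small.
  by rewrite addnS -addn1 -modnDml addn1 Psucc // ltn_mod; lia.
by have := Pmn (i + k - m); rewrite addnBA ?addKn ?modnDr ?modn_small //; lia.
Qed.

Section DoubleCycle.
Variables (T : finType) (arc : rel T) (k : nat) (a b c : nat -> T).
Hypotheses (arc_oriented : oriented arc) (abc_cycle : double_cycle arc k a b c).

Let verts m := [:: a m; b m; c m].

Lemma cycle_index_eq i j u : i < k -> j < k ->
  u \in verts i -> u \in verts j -> i = j.
Proof.
move=> ik jk ui uj; have [_ abc_path abc_uniq _] := abc_cycle.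
have sameS : [set a i; b i; c i] = [set a j; b j; c j].
  have memE m z : (z \in [set a m; b m; c m]) = (z \in verts m).
    by rewrite !inE orbA.
  apply/setP => z; rewrite !memE; apply/idP/idP.
  - exact: mpath_meet (abc_path _ jk) (abc_path _ ik) uj ui z.
  - exact: mpath_meet (abc_path _ ik) (abc_path _ jk) ui uj z.
have [ij|ji|//] := ltngtP i j.
- by move: (abc_uniq i j); rewrite ij jk sameS eqxx => /(_ isT).
- by move: (abc_uniq j i); rewrite ji ik sameS eqxx => /(_ isT).
Qed.

Lemma cycle_arcE i j u w : i < k -> j < k -> i != j ->
  u \in verts i -> w \in verts j -> arc u w = ~~ arc w u.
Proof.
move=> ik jk ij ui wj; have [_ abc_path _ _] := abc_cycle.
have uw : u != w.
  by apply: contraNneq ij => uw; rewrite uw in ui; rewrite (cycle_index_eq ik jk ui wj).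
have not_miss : ~~ miss arc u w.
  apply: contraNN ij => /(mpath_miss_closed (abc_path _ ik) ui) wi.
  by rewrite (cycle_index_eq ik jk wi wj).
move: not_miss; rewrite /miss uw /= negb_and !negbK.
case wu: (arc w u); rewrite ?orbT ?orbF //= => _.
exact/negbTE/(arc_asym arc_oriented).
Qed.

Lemma cycle_ploses m : m < k ->
  ploses arc (a m) (b m) (c m) (a (m.+1 %% k)) (b (m.+1 %% k)) (c (m.+1 %% k)).
Proof. by case: abc_cycle => _ _ _; apply. Qed.

Variables (j : nat) (v : T).
Hypotheses (jk : j < k) (vj : v \in verts j).

Let dominated m := dominated_by_edge arc v (a m) (b m) (c m).
Let dominating m := dominates_edge arc v (a m) (b m) (c m).

Lemma dominated_succ m : m < k -> dominated m -> dominated (m.+1 %% k).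
Proof.
move=> mk dom_m; have m'k : m.+1 %% k < k by rewrite ltn_mod; lia.
have not_vw := ploses_dominated arc_oriented (cycle_ploses mk) dom_m.
have [m'j|m'j] := eqVneq (m.+1 %% k) j.
  have vm' : v \in verts (m.+1 %% k) by rewrite m'j.
  by have /andP[_] := not_vw _ vm'; rewrite eqxx.
have arc_wv w : w \in verts (m.+1 %% k) -> arc w v.
  move=> wm'; rewrite (cycle_arcE m'k jk m'j wm' vj).
  by have /andP[] := not_vw _ wm'.
by rewrite /dominated /dominated_by_edge !arc_wv ?inE ?eqxx ?orbT.
Qed.

Lemma dominating_pred m : m < k -> dominating (m.+1 %% k) -> dominating m.
Proof.
move=> mk dom_m'.
have not_uv := ploses_dominates arc_oriented (cycle_ploses mk) dom_m'.
have [jm|jm] := eqVneq j m.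
  have vm : v \in verts m by rewrite -jm.
  by have /andP[_] := not_uv _ vm; rewrite eqxx.
have arc_vu u : u \in verts m -> arc v u.
  move=> um; rewrite (cycle_arcE jk mk jm vj um).
  by have /andP[] := not_uv _ um.
by rewrite /dominating /dominates_edge !arc_vu ?inE ?eqxx ?orbT.
Qed.

Lemma not_dominated i : i < k -> ~~ dominated i.
Proof.
move=> ik; have [_ abc_path _ _] := abc_cycle.
apply: contraNN (mpath_not_dominated_by_edge arc_oriented (abc_path _ jk) vj).
exact: succ_mod_closed dominated_succ ik jk.
Qed.

Lemma not_dominating i : i < k -> ~~ dominating i.
Proof.
move=> ik; have [_ abc_path _ _] := abc_cycle.
apply: (succ_mod_closed (P := fun m => ~~ dominating m)) jk ik _.
- by move=> m mk; apply: contraNN (dominating_pred mk).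
- exact: (mpath_not_dominates_edge arc_oriented (abc_path _ jk) vj).
Qed.

Lemma cycle_edge_arc_iff i p q : i < k -> i != j ->
  [\/ (p, q) = (a i, b i), (p, q) = (b i, a i),
      (p, q) = (b i, c i) | (p, q) = (c i, b i)] ->
  (arc v p <-> arc q v) /\ (arc v q <-> arc p v).
Proof.
move=> ik ij pq; have ji : j != i by rewrite eq_sym.
have [pi qi] : p \in verts i /\ q \in verts i.
  by case: pq => -[-> ->]; rewrite /verts !inE !eqxx ?orbT.
have not_into : ~~ (arc p v && arc q v).
  apply: contra (not_dominated ik) => /andP[pv qv].
  rewrite /dominated /dominated_by_edge.
  by case: pq => -[<- <-]; rewrite pv qv ?orbT.
have not_out : ~~ (arc v p && arc v q).
  apply: contra (not_dominating ik) => /andP[vp vq].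
  rewrite /dominating /dominates_edge.
  by case: pq => -[<- <-]; rewrite vp vq ?orbT.
move: not_out; rewrite (cycle_arcE jk ik ji vj pi) (cycle_arcE jk ik ji vj qi).
by move: not_into; case: (arc p v); case: (arc q v).
Qed.

End DoubleCycle.

Theorem corollary4p7 (T : finType) (arc : rel T) (k : nat)
    (a b c x y : nat -> T) :
  oriented arc ->
  missing_disjoint_P3 arc ->
  double_cycle arc k a b c ->
  (forall i, i < k ->
     [\/ (x i, y i) = (a i, b i), (x i, y i) = (b i, a i),
         (x i, y i) = (b i, c i) | (x i, y i) = (c i, b i)]) ->
  forall j i, j < k -> i < k -> i != j ->
    [/\ arc (x j) (x i) <-> arc (y i) (x j),
        arc (x j) (y i) <-> arc (x i) (x j),
        arc (y j) (x i) <-> arc (y i) (y j) &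
        arc (y j) (y i) <-> arc (x i) (y j)].
Proof.
(* The component clause of [mpath] already makes the paths of a double cycle
   components of the missing graph. *)
move=> arc_oriented _ abc_cycle xy_edge j i jk ik ij.
have [xj yj] : x j \in [:: a j; b j; c j] /\ y j \in [:: a j; b j; c j].
  by case: (xy_edge j jk) => -[-> ->]; rewrite !inE !eqxx ?orbT.
have [x1 x2] := cycle_edge_arc_iff arc_oriented abc_cycle jk xj ik ij (xy_edge i ik).
have [y1 y2] := cycle_edge_arc_iff arc_oriented abc_cycle jk yj ik ij (xy_edge i ik).
by split.
Qed.
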